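(* Let $G=(V,E)$ be an acyclic finite directed graph, $\Gamma\subset V$ a subset containing all sinks and sources of $G$ with $V\setminus\Gamma\neq\emptyset$, and $z\in\mathrm{Sym}_d^\Gamma$. For $x\in\mathrm{Sym}_d^V(z)$, both $\phi_d(x)\to\infty$ and $\chi_d(x)\to\infty$ as $\|x\|\to\infty$, where $\|\cdot\|$ is any norm on $\mathrm{Sym}_d^V$.
   Context: Edges are ordered pairs $(v,w)$ with $v\neq w$, written $v\to w$; a sink has no outgoing edges, a source no incoming edges; acyclic means no directed cycles. $\mathrm{Sym}_d$ is the space of $d\times d$ real symmetric matrices, $\mathrm{Sym}_d^V$ arrays $x=(x_v)_{v\in V}$, and $\mathrm{Sym}_d^V(z)=\{x\in\mathrm{Sym}_d^V:x_v=z_v\ \forall v\in\Gamma\}$. $\phi_d(x)=\sum_{v\to w}\operatorname{tr}[e^{x_v}e^{-x_w}]$ and $\chi_d(x)=\sum_{v\to w}\operatorname{tr}[e^{x_v-x_w}]$ (matrix exponentials). *)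

From HB Require Import structures.
From mathcomp Require Import all_boot all_order all_algebra.
From mathcomp Require Import all_classical all_reals all_analysis.
Set Implicit Arguments. Unset Strict Implicit. Unset Printing Implicit Defensive.
Import Order.TTheory GRing.Theory Num.Theory.
Import numFieldNormedType.Exports.
Local Open Scope ring_scope.

Definition expmx {R : realType} (d : nat) (A : 'M[R]_d) : 'M[R]_d :=
  limn (series (fun k : nat => (k`!%:R)^-1 *: A ^+ k)).

Definition symmx {R : realType} (d : nat) (A : 'M[R]_d) : Prop := A^T = A.

Definition loopless {V : finType} (E : rel V) : Prop := forall v, ~~ E v v.

Definition acyclic {V : finType} (E : rel V) : Prop :=
  forall (v : V) (p : seq V), p != [::] -> path E v p -> last v p != v.

Definition is_sink {V : finType} (E : rel V) (v : V) : Prop := forall w, ~~ E v w.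
Definition is_source {V : finType} (E : rel V) (v : V) : Prop := forall w, ~~ E w v.

Definition SymV {R : realType} {V : finType} (d : nat) (x : V -> 'M[R]_d) : Prop :=
  forall v, symmx (x v).
Definition SymVz {R : realType} {V : finType} (d : nat) (Gamma : {set V})
  (z : V -> 'M[R]_d) (x : V -> 'M[R]_d) : Prop :=
  SymV x /\ forall v, v \in Gamma -> x v = z v.

Definition is_norm_SymV {R : realType} {V : finType} (d : nat)
  (N : (V -> 'M[R]_d) -> R) : Prop :=
  [/\ forall x, SymV x -> 0 <= N x,
      forall x, SymV x -> N x = 0 -> x = (fun _ => 0),
      forall (a : R) x, SymV x -> N (fun v => a *: x v) = `|a| * N x
    & forall x y, SymV x -> SymV y -> N (fun v => x v + y v) <= N x + N y].

Definition phi_d {R : realType} {V : finType} (d : nat) (E : rel V)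
  (x : V -> 'M[R]_d) : R :=
  \sum_(v : V) \sum_(w : V | E v w) \tr (expmx (x v) *m expmx (- x w)).

Definition chi_d {R : realType} {V : finType} (d : nat) (E : rel V)
  (x : V -> 'M[R]_d) : R :=
  \sum_(v : V) \sum_(w : V | E v w) \tr (expmx (x v - x w)).

Definition coercive_on {R : realType} {X : Type} (S : X -> Prop)
  (N : X -> R) (f : X -> R) : Prop :=
  forall M : R, exists r : R, forall x, S x -> r < N x -> M < f x.

(* A real symmetric matrix A is diagonalized by a complex unitary matrix with
   rows a_i + i b_i, so that A^k = sum_i l_i^k (a_i^T a_i + b_i^T b_i) and
   exp A = sum_i e^(l_i) (a_i^T a_i + b_i^T b_i). Rayleigh-quotient bounds then
   give, for symmetric A and B, both tr (e^A e^-B) and tr e^(A - B) at least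
   e^(l_i(A) - max spec B) and e^(min spec A - l_j(B)). Hence, if phi_d(x) or
   chi_d(x) is at most M >= 1, along every edge v -> w both the largest and
   the smallest eigenvalue drop by at most ln M. Walking to a
   sink, resp. from a source, where x = z is fixed, bounds all eigenvalues of
   all x_v, hence all entries, hence the norm of x. *)

From HB Require Import structures.
From mathcomp Require Import all_boot all_order all_algebra.
From mathcomp Require Import all_classical all_reals all_analysis.
From mathcomp Require Import complex.
From mathcomp Require Import ring lra.
Set Implicit Arguments. Unset Strict Implicit. Unset Printing Implicit Defensive.
Import Order.TTheory GRing.Theory Num.Theory.
Import numFieldNormedType.Exports.
Local Open Scope ring_scope.

Section QuadraticForms.
Variables (R : realFieldType) (n : nat).
Implicit Types (y : 'rV[R]_n) (M Q : 'M[R]_n) (a b c e : 'I_n -> 'rV[R]_n) (p q : 'I_n -> R).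

Definition sqnorm y : R := (y *m y^T) 0 0.
Definition qform M y : R := (y *m M *m y^T) 0 0.

(* Real part of the rank-one projector (a + i b)^* (a + i b). *)
Definition reproj (a b : 'rV[R]_n) : 'M[R]_n := a^T *m a + b^T *m b.

(* Modelled on the real and imaginary parts of the rows a i + i b i of a
   unitary complex matrix. *)
Definition parseval_pairs a b :=
  (forall y, sqnorm y = \sum_i qform (reproj (a i) (b i)) y)
  /\ (forall i, sqnorm (a i) + sqnorm (b i) = 1).

Lemma sqnorm_ge0 y : 0 <= sqnorm y.
Proof. by rewrite /sqnorm mxE sumr_ge0 // => j _; rewrite mxE -expr2 sqr_ge0. Qed.

Lemma sqr_coord_le_sqnorm y j : y 0 j ^+ 2 <= sqnorm y.
Proof.
rewrite /sqnorm mxE (bigD1 j) //= mxE -expr2 lerDl.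
by apply: sumr_ge0 => k _; rewrite mxE -expr2 sqr_ge0.
Qed.

Lemma qform1 y : qform 1%:M y = sqnorm y.
Proof. by rewrite /qform mulmx1. Qed.

Lemma qformB M Q y : qform (M - Q) y = qform M y - qform Q y.
Proof. by rewrite /qform mulmxBr mulmxBl !mxE. Qed.

Lemma qform_eigen M y (r : R) : y *m M = r *: y -> qform M y = r * sqnorm y.
Proof. by move=> yM; rewrite /qform yM -scalemxAl mxE. Qed.

Lemma qform_sum (I : finType) (p : I -> R) (M : I -> 'M[R]_n) y :
  qform (\sum_i p i *: M i) y = \sum_i p i * qform (M i) y.
Proof.
rewrite /qform mulmx_sumr mulmx_suml summxE; apply: eq_bigr => i _.
by rewrite -scalemxAr -scalemxAl mxE.
Qed.

Lemma qform_reproj (u v : 'rV[R]_n) y :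
  qform (reproj u v) y = (y *m u^T) 0 0 ^+ 2 + (y *m v^T) 0 0 ^+ 2.
Proof.
have entry11 (s t : 'rV[R]_n) : (s *m t^T) 0 0 = (t *m s^T) 0 0.
  by rewrite -[s *m t^T]trmxK trmx_mul trmxK mxE.
have split_rank1 (s : 'rV[R]_n) :
  y *m (s^T *m s) *m y^T = (y *m s^T) *m (s *m y^T) by rewrite !mulmxA.
have entry_mul11 (s t : 'M[R]_1) : (s *m t) 0 0 = s 0 0 * t 0 0.
  by rewrite mxE big_ord1.
rewrite /qform /reproj mulmxDr mulmxDl mxE !split_rank1 !entry_mul11.
by rewrite (entry11 u) (entry11 v) !expr2.
Qed.

Lemma qform_reproj_ge0 (u v : 'rV[R]_n) y : 0 <= qform (reproj u v) y.
Proof. by rewrite qform_reproj addr_ge0 ?sqr_ge0. Qed.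

Lemma reproj_entry_le1 (u v : 'rV[R]_n) i j :
  sqnorm u + sqnorm v = 1 -> `|reproj u v i j| <= 1.
Proof.
move=> uv1; rewrite /reproj !mxE !big_ord1 !mxE.
have := sqr_coord_le_sqnorm u i; have := sqr_coord_le_sqnorm u j.
have := sqr_coord_le_sqnorm v i; have := sqr_coord_le_sqnorm v j.
have := sqnorm_ge0 u; have := sqnorm_ge0 v.
move: (u 0 i) (u 0 j) (v 0 i) (v 0 j) => ui uj vi vj *.
have := sqr_ge0 (ui - uj); have := sqr_ge0 (ui + uj).
have := sqr_ge0 (vi - vj); have := sqr_ge0 (vi + vj); rewrite !expr2 => *.
rewrite ler_norml; apply/andP; split; nra.
Qed.

Lemma mxtrace_reproj_mul (u v : 'rV[R]_n) Q :
  \tr (reproj u v *m Q) = qform Q u + qform Q v.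
Proof.
rewrite /reproj mulmxDl mxtraceD -!mulmxA !(mxtrace_mulC (_^T)) /qform.
by rewrite /mxtrace !big_ord1.
Qed.

Lemma mxtrace_sum_mul (I : finType) (p : I -> R) (M : I -> 'M[R]_n) Q :
  \tr ((\sum_i p i *: M i) *m Q) = \sum_i p i * \tr (M i *m Q).
Proof.
rewrite mulmx_suml raddf_sum; apply: eq_bigr => i _.
by rewrite -scalemxAl; apply: mxtraceZ.
Qed.

Section Parseval.
Variables (a b : 'I_n -> 'rV[R]_n).
Hypothesis ab : parseval_pairs a b.

Lemma mxtrace_parseval p : \tr (\sum_i p i *: reproj (a i) (b i)) = \sum_i p i.
Proof.
rewrite raddf_sum; apply: eq_bigr => i _.
change (\tr (p i *: reproj (a i) (b i)) = p i).
by rewrite mxtraceZ -[reproj _ _]mulmx1 mxtrace_reproj_mul !qform1 ab.2 mulr1.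
Qed.

Lemma qform_parseval_ge p (g : R) y : (forall i, g <= p i) ->
  g * sqnorm y <= qform (\sum_i p i *: reproj (a i) (b i)) y.
Proof.
move=> gp; rewrite qform_sum ab.1 mulr_sumr; apply: ler_sum => i _.
by rewrite ler_wpM2r ?qform_reproj_ge0.
Qed.

Lemma qform_parseval_le p (g : R) y : (forall i, p i <= g) ->
  qform (\sum_i p i *: reproj (a i) (b i)) y <= g * sqnorm y.
Proof.
move=> pg; rewrite qform_sum ab.1 mulr_sumr; apply: ler_sum => i _.
by rewrite ler_wpM2r ?qform_reproj_ge0.
Qed.

Lemma parseval_qform_le_weight p y1 y2 : sqnorm y1 + sqnorm y2 = 1 ->
  exists j, qform (\sum_i p i *: reproj (a i) (b i)) y1
            + qform (\sum_i p i *: reproj (a i) (b i)) y2 <= p j.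
Proof.
move=> y12; case: (pickP (@predT 'I_n)) => [i0 _|n0]; last first.
  by move: y12; rewrite /sqnorm !mxE !big_pred0 // addr0 => /eqP; rewrite eq_sym oner_eq0.
have [j _ pj] := @arg_maxP _ _ _ i0 xpredT p erefl.
exists j; rewrite -[p j]mulr1 -y12 mulrDr.
by apply: lerD; apply: qform_parseval_le => i; apply: pj.
Qed.

End Parseval.

Lemma mxtrace_parseval_mul_ge a b c e p q (g : R) :
  parseval_pairs a b -> parseval_pairs c e ->
  (forall i, 0 <= p i) -> (forall j, g <= q j) -> 0 <= g ->
  let T := \tr ((\sum_i p i *: reproj (a i) (b i)) *m
                (\sum_j q j *: reproj (c j) (e j))) in
  0 <= T /\ forall i, p i * g <= T.
Proof.
move=> ab ce p0 gq g0 T.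
have gT i : g <= \tr (reproj (a i) (b i) *m \sum_j q j *: reproj (c j) (e j)).
  rewrite mxtrace_reproj_mul -[g]mulr1 -(ab.2 i) mulrDr.
  by apply: lerD; exact: (qform_parseval_ge ce _ gq).
have T0 i : 0 <= p i * \tr (reproj (a i) (b i) *m \sum_j q j *: reproj (c j) (e j)).
  by rewrite mulr_ge0 //; apply: le_trans (gT i).
rewrite /T mxtrace_sum_mul; split; first exact: sumr_ge0.
move=> i; rewrite (bigD1 i) //= -[X in X <= _]addr0.
by apply: lerD; [apply: ler_wpM2l | apply: sumr_ge0].
Qed.

Definition spectral_pairs M (l : 'I_n -> R) a b :=
  [/\ forall k, M ^+ k = \sum_i l i ^+ k *: reproj (a i) (b i),
      parseval_pairs a b,
      forall i, a i *m M = l i *: a i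
    & forall i, b i *m M = l i *: b i].

Section SpectralPairs.
Variables (M : 'M[R]_n) (l : 'I_n -> R) (a b : 'I_n -> 'rV[R]_n).
Hypothesis Mlab : spectral_pairs M l a b.

Lemma spectral_pairs_parseval : parseval_pairs a b.
Proof. by case: Mlab. Qed.

Lemma spectral_pairs_sum : M = \sum_i l i *: reproj (a i) (b i).
Proof.
by case: Mlab => Mk _ _ _; rewrite -[M]expr1 Mk; under eq_bigr do rewrite expr1.
Qed.

Lemma spectral_pairs_sym : M^T = M.
Proof.
apply/matrixP => x y; rewrite mxE spectral_pairs_sum !summxE.
by apply: eq_bigr => i _; rewrite !mxE !big_ord1 !mxE; ring.
Qed.

Lemma qform_spectral_pair i : qform M (a i) + qform M (b i) = l i.
Proof.
case: Mlab => _ [_ ab1] Ma Mb.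
by rewrite (qform_eigen (Ma i)) (qform_eigen (Mb i)) -mulrDr ab1 mulr1.
Qed.

Lemma qform_spectral_pair_le (beta : R) y1 y2 : (forall i, l i <= beta) ->
  sqnorm y1 + sqnorm y2 = 1 -> qform M y1 + qform M y2 <= beta.
Proof.
move=> lb y12; rewrite spectral_pairs_sum -[beta]mulr1 -y12 mulrDr.
by apply: lerD; exact: (qform_parseval_le spectral_pairs_parseval _ lb).
Qed.

Lemma qform_spectral_pair_ge (alpha : R) y1 y2 : (forall i, alpha <= l i) ->
  sqnorm y1 + sqnorm y2 = 1 -> alpha <= qform M y1 + qform M y2.
Proof.
move=> al y12; rewrite spectral_pairs_sum -[alpha]mulr1 -y12 mulrDr.
by apply: lerD; exact: (qform_parseval_ge spectral_pairs_parseval _ al).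
Qed.

Lemma spectral_sqr_le_mxtrace i : l i ^+ 2 <= \tr (M ^+ 2).
Proof.
case: Mlab => Mk ab _ _; rewrite Mk mxtrace_parseval // (bigD1 i) //= lerDl.
by apply: sumr_ge0 => j _; apply: sqr_ge0.
Qed.

Lemma spectral_entry_le (g : R) : (forall i, `|l i| <= g) ->
  forall j k, `|M j k| <= n%:R * g.
Proof.
move=> lg j k; have [_ ab1] := spectral_pairs_parseval.
rewrite spectral_pairs_sum summxE.
apply: le_trans (ler_norm_sum _ _ _) _.
apply: le_trans (_ : \sum_(i < n) g <= _); last by rewrite sumr_const card_ord mulr_natl.
apply: ler_sum => i _.
rewrite mxE normrM -[g]mulr1.
by apply: ler_pM; rewrite ?normr_ge0 ?lg ?reproj_entry_le1.
Qed.

End SpectralPairs.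

End QuadraticForms.

Lemma expmx_spectral (R : realType) n (A : 'M[R]_n) (l : 'I_n -> R)
    (G : 'I_n -> 'M[R]_n) :
  (forall k, A ^+ k = \sum_i l i ^+ k *: G i) ->
  expmx A = \sum_i expR (l i) *: G i.
Proof.
move=> Ak.
have partial_sums : series (fun k => k`!%:R^-1 *: A ^+ k) =
    (fun N => \sum_i series (exp_coeff (l i)) N *: G i).
  apply/funext => N; rewrite /series /= (eq_bigr _ (fun k _ => congr1 _ (Ak k))).
  under eq_bigr do rewrite scaler_sumr.
  rewrite exchange_big /=; apply: eq_bigr => i _.
  rewrite scaler_suml; apply: eq_bigr => k _.
  by rewrite scalerA /exp_coeff /= mulrC.
rewrite /expmx partial_sums; apply: cvg_lim; first exact: norm_hausdorff.
apply: cvg_big => [|i _]; first exact: add_continuous.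
exact: cvgZr_tmp (is_cvg_series_exp_coeff (l i)).
Qed.

Section RealSpectralTheorem.
Variable R : rcfType.
Local Notation C := (complex R).
Local Notation toC := (real_complex R).
Local Notation Re := complex.Re.
Local Notation Im := complex.Im.
Local Open Scope sesquilinear_scope.

Lemma Re_sum (I : Type) (r : seq I) (F : I -> C) :
  Re (\sum_(i <- r) F i) = \sum_(i <- r) Re (F i).
Proof.
elim: r => [|i r IH]; first by rewrite !big_nil.
by rewrite !big_cons -IH; case: (F i); case: (\sum_(j <- r) F j).
Qed.

Lemma Im_sum (I : Type) (r : seq I) (F : I -> C) :
  Im (\sum_(i <- r) F i) = \sum_(i <- r) Im (F i).
Proof.
elim: r => [|i r IH]; first by rewrite !big_nil.
by rewrite !big_cons -IH; case: (F i); case: (\sum_(j <- r) F j).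
Qed.

Lemma Re_mul_real (u : C) (r : R) : Re (u * toC r) = Re u * r.
Proof. by case: u => a b /=; rewrite !mulr0 subr0. Qed.

Lemma Im_mul_real (u : C) (r : R) : Im (u * toC r) = Im u * r.
Proof. by case: u => a b /=; rewrite !mulr0 add0r. Qed.

Lemma Re_conj_mul_real_mul (u v : C) (r : R) :
  Re (Num.conj u * toC r * v) = r * (Re u * Re v + Im u * Im v).
Proof. by case: u => a b; case: v => c e /=; ring. Qed.

Lemma Re_mul_conj (u : C) : Re (u * Num.conj u) = Re u ^+ 2 + Im u ^+ 2.
Proof. by case: u => a b /=; ring. Qed.

Variable n : nat.
Implicit Types (A : 'M[R]_n) (l : 'I_n -> R).

Lemma map_mx_real_complexX A k : map_mx toC (A ^+ k) = map_mx toC A ^+ k.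
Proof.
elim: k => [|k IH]; first by rewrite !expr0 map_mx1.
by rewrite !exprSr -!mulmxE map_mxM IH.
Qed.

Lemma symmx_unitary_diagonalization A : A^T = A ->
  exists (P : 'M[C]_n) l, P \is unitarymx /\
    map_mx toC A = P^t* *m diag_mx (\row_i toC (l i)) *m P.
Proof.
move=> sA; set Ac := map_mx toC A.
have Asym : Ac \is symmetricmx.
  by apply/is_hermitianmxP; rewrite expr0 scale1r map_mx_id // /Ac map_trmx sA.
have Areal : Ac \is a mxOver Num.real.
  by apply/mxOverP => i j; rewrite mxE complex_real.
have Aherm := realsym_hermsym Asym Areal.
have /orthomx_spectralP := hermitian_normalmx Aherm.
have Pu := spectral_unitarymx Ac; rewrite invmx_unitary // => AE.
exists (spectralmx Ac), (fun i => Re (spectral_diag Ac 0 i)); split => //.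
rewrite {1}AE; congr (_ *m diag_mx _ *m _); apply/rowP => i; rewrite mxE RRe_real //.
by move/mxOverP: (hermitian_spectral_diag_real Aherm); apply.
Qed.

Section FromUnitary.
Variables (A : 'M[R]_n) (P : 'M[C]_n) (l : 'I_n -> R).
Hypotheses (Pu : P \is unitarymx)
  (AP : map_mx toC A = P^t* *m diag_mx (\row_i toC (l i)) *m P).

Let a i : 'rV[R]_n := \row_x Re (P i x).
Let b i : 'rV[R]_n := \row_x Im (P i x).

Lemma unitary_diag_powers k :
  map_mx toC (A ^+ k) = P^t* *m diag_mx (\row_i toC (l i ^+ k)) *m P.
Proof.
have PPt : P *m P^t* = 1%:M by apply/unitarymxP.
have PtP : P^t* *m P = 1%:M.
  by rewrite -invmx_unitary // mulVmx // unitarymx_unit.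
rewrite map_mx_real_complexX AP; elim: k => [|k IH].
  rewrite expr0 (_ : diag_mx _ = 1%:M) ?mulmx1 ?PtP //.
  by apply/matrixP => i j; rewrite !mxE expr0.
rewrite exprSr -mulmxE IH -!mulmxA (mulmxA P) PPt mul1mx.
rewrite (mulmxA (diag_mx _)) mulmx_diag; congr (_ *m (diag_mx _ *m _)).
by apply/rowP => j; rewrite !mxE exprSr rmorphM.
Qed.

Lemma unitary_diag_real_powers k :
  A ^+ k = \sum_i l i ^+ k *: reproj (a i) (b i).
Proof.
apply/matrixP => x y.
have -> : (A ^+ k) x y = Re (map_mx toC (A ^+ k) x y) by rewrite mxE.
rewrite unitary_diag_powers mul_mx_diag !mxE summxE Re_sum.
apply: eq_bigr => i _; rewrite !mxE !big_ord1 !mxE.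
by rewrite Re_conj_mul_real_mul.
Qed.

Lemma unitary_rows_sqnorm i : sqnorm (a i) + sqnorm (b i) = 1.
Proof.
have : Re ((P *m P^t*) i i) = 1 by move/unitarymxP: Pu => ->; rewrite mxE eqxx.
rewrite mxE Re_sum => <-; rewrite /sqnorm !mxE -big_split /=.
by apply: eq_bigr => x _; rewrite !mxE Re_mul_conj !expr2.
Qed.

Lemma unitary_rows_eigen i : a i *m A = l i *: a i /\ b i *m A = l i *: b i.
Proof.
have PA : P *m map_mx toC A = diag_mx (\row_i toC (l i)) *m P.
  by rewrite AP !mulmxA (unitarymxP Pu) mul1mx.
have /matrixP PAi := PA; split; apply/rowP => y; have := PAi i y;
  rewrite mul_diag_mx !mxE => /(congr1 (fun u : C => (Re u, Im u))) [].
- by rewrite Re_sum mulrC Re_mul_real => ReE _; rewrite mulrC -ReE;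
     apply: eq_bigr => j _; rewrite !mxE Re_mul_real.
- by rewrite Im_sum mulrC Im_mul_real => _ ImE; rewrite mulrC -ImE;
     apply: eq_bigr => j _; rewrite !mxE Im_mul_real.
Qed.

Lemma unitary_diag_spectral_pairs : spectral_pairs A l a b.
Proof.
split.
- exact: unitary_diag_real_powers.
- split; last exact: unitary_rows_sqnorm.
  move=> y; rewrite -qform1 (_ : 1%:M = A ^+ 0) // unitary_diag_real_powers.
  by rewrite qform_sum; apply: eq_bigr => i _; rewrite expr0 mul1r.
- by move=> i; case: (unitary_rows_eigen i).
- by move=> i; case: (unitary_rows_eigen i).
Qed.

End FromUnitary.

Lemma symmx_spectral_pairs A : A^T = A -> exists l a b, spectral_pairs A l a b.
Proof.
move=> /symmx_unitary_diagonalization [P [l [Pu AP]]].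
by exists l; do 2 eexists; exact: unitary_diag_spectral_pairs Pu AP.
Qed.

End RealSpectralTheorem.

Section EigenvalueGap.
Variables (R : realType) (n : nat).
Implicit Types (A B : 'M[R]_n) (l m : 'I_n -> R) (a b c e : 'I_n -> 'rV[R]_n).

Lemma spectral_pairs_expmx A l a b : spectral_pairs A l a b ->
  expmx A = \sum_i expR (l i) *: reproj (a i) (b i).
Proof. by case=> Ak _ _ _; apply: expmx_spectral. Qed.

Lemma spectral_pairs_expmxN A l a b : spectral_pairs A l a b ->
  expmx (- A) = \sum_i expR (- l i) *: reproj (a i) (b i).
Proof.
case=> Ak _ _ _; apply: expmx_spectral => k.
have scaleX (r : R) (M : 'M[R]_n) j : (r *: M) ^+ j = r ^+ j *: M ^+ j.
  elim: j => [|j IH]; first by rewrite !expr0 scale1r.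
  by rewrite !exprS -!mulmxE IH -scalemxAl -scalemxAr scalerA.
rewrite -scaleN1r scaleX Ak scaler_sumr; apply: eq_bigr => i _.
by rewrite scalerA -exprMn mulN1r.
Qed.

Lemma mxtrace_expmx_ge0 A l a b : spectral_pairs A l a b -> 0 <= \tr (expmx A).
Proof.
move=> Alab; rewrite (spectral_pairs_expmx Alab).
rewrite (mxtrace_parseval (spectral_pairs_parseval Alab)).
by apply: sumr_ge0 => i _; apply: expR_ge0.
Qed.

(* The mean of qform A over a unit pair lies below some eigenvalue of A. *)
Lemma mxtrace_expmx_ge A l a b (s : R) y1 y2 : spectral_pairs A l a b ->
  sqnorm y1 + sqnorm y2 = 1 -> s <= qform A y1 + qform A y2 ->
  expR s <= \tr (expmx A).
Proof.
move=> Alab y12 sA; have ab := spectral_pairs_parseval Alab.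
have [j Aj] := parseval_qform_le_weight ab l y12.
rewrite -(spectral_pairs_sum Alab) in Aj.
rewrite (spectral_pairs_expmx Alab) (mxtrace_parseval ab).
apply: le_trans (_ : expR (l j) <= _); first by rewrite ler_expR (le_trans sA).
rewrite (bigD1 j) //= lerDl.
by apply: sumr_ge0 => k _; apply: expR_ge0.
Qed.

Definition bounds_exp_eigengap (T : 'M[R]_n -> 'M[R]_n -> R) :=
  forall A B l a b m c e, spectral_pairs A l a b -> spectral_pairs B m c e ->
  [/\ 0 <= T A B,
      forall beta, (forall j, m j <= beta) -> forall i, expR (l i - beta) <= T A B
    & forall alpha, (forall i, alpha <= l i) -> forall j, expR (alpha - m j) <= T A B].

Lemma phi_bounds_exp_eigengap :
  bounds_exp_eigengap (fun A B => \tr (expmx A *m expmx (- B))).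
Proof.
move=> A B l a b m c e Alab Bmce.
have ab := spectral_pairs_parseval Alab; have ce := spectral_pairs_parseval Bmce.
have expR_ge0' (r : 'I_n -> R) i : 0 <= expR (r i) by apply: expR_ge0.
split.
- rewrite (spectral_pairs_expmx Alab) (spectral_pairs_expmxN Bmce).
  by have [] := mxtrace_parseval_mul_ge ab ce (expR_ge0' l) (expR_ge0' (- m)) (lexx 0).
- move=> beta mb i; rewrite (spectral_pairs_expmx Alab) (spectral_pairs_expmxN Bmce).
  have mb' j : expR (- beta) <= expR (- m j) by rewrite ler_expR lerN2.
  have [_] := mxtrace_parseval_mul_ge ab ce (expR_ge0' l) mb' (expR_ge0 _).
  by rewrite expRD; apply.
- move=> alpha al j; rewrite mxtrace_mulC.
  rewrite (spectral_pairs_expmx Alab) (spectral_pairs_expmxN Bmce).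
  have al' i : expR alpha <= expR (l i) by rewrite ler_expR.
  have [_] := mxtrace_parseval_mul_ge ce ab (expR_ge0' (- m)) al' (expR_ge0 _).
  by rewrite addrC expRD; apply.
Qed.

Lemma chi_bounds_exp_eigengap :
  bounds_exp_eigengap (fun A B => \tr (expmx (A - B))).
Proof.
move=> A B l a b m c e Alab Bmce.
have sAB : (A - B)^T = A - B.
  by rewrite linearB /= (spectral_pairs_sym Alab) (spectral_pairs_sym Bmce).
have [nu [c' [e' ABnu]]] := symmx_spectral_pairs sAB.
have [_ [_ ab1] Aa Ab] := Alab; have [_ [_ ce1] Bc Be] := Bmce.
split; first exact: mxtrace_expmx_ge0 ABnu.
- move=> beta mb i; apply: (mxtrace_expmx_ge ABnu (ab1 i)).
  rewrite !qformB addrACA -opprD (qform_spectral_pair Alab).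
  by rewrite lerD2l lerN2 (qform_spectral_pair_le Bmce).
- move=> alpha al j; apply: (mxtrace_expmx_ge ABnu (ce1 j)).
  rewrite !qformB addrACA -opprD (qform_spectral_pair Bmce).
  by rewrite lerD2r (qform_spectral_pair_ge Alab).
Qed.

End EigenvalueGap.

Section AcyclicGraphs.
Variable T : finType.
Implicit Types (e : rel T) (v : T) (p : seq T).

Lemma acyclic_path_uniq e v p : acyclic e -> path e v p -> uniq (v :: p).
Proof.
move=> ac; elim: p v => [//|w p IH] v vwp.
have /andP[evw wp] := vwp.
rewrite cons_uniq IH // andbT; apply/negP => vin.
move: vwp; move: (w :: p) vin => s /splitPr[p1 p2].
rewrite cat_path => /andP[vp1 /andP[p1v _]].
have := ac v (rcons p1 v); rewrite last_rcons eqxx rcons_path vp1 p1v /=.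
by case: p1 {vp1 p1v} => [|x p1] /(_ isT isT).
Qed.

Lemma acyclic_path_size e v p : acyclic e -> path e v p -> (size p < #|T|)%N.
Proof.
move=> ac vp; rewrite cardE.
exact: uniq_leq_size (acyclic_path_uniq ac vp) (fun x _ => mem_enum T x).
Qed.

Lemma acyclic_converse e : acyclic e -> acyclic (fun v w => e w v).
Proof.
move=> ac v p p0 vp; apply/negP => /eqP lastv.
have := rev_path e v p; rewrite vp lastv => revp.
case: p p0 vp lastv revp => [//|w p] _ _ _ revp.
have := ac v (rev (belast v (w :: p))).
rewrite revp /= rev_cons last_rcons eqxx.
have -> : rcons (rev (belast w p)) v != [::] by case: (rev _).
by move=> /(_ isT isT).
Qed.

(* Induction from the sinks: every vertex reaches a sink by a path of fewer
   than #|T| edges. *)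
Lemma acyclic_sink_induction (R : numDomainType) e (Q : T -> R -> Prop) (L c : R) :
  acyclic e -> 0 <= c ->
  (forall v b b', b <= b' -> Q v b -> Q v b') ->
  (forall v, (forall w, ~~ e v w) -> Q v L) ->
  (forall v w b, e v w -> Q w b -> Q v (b + c)) ->
  forall v, Q v (L + #|T|%:R * c).
Proof.
move=> ac c0 Qmono Qsink Qstep.
have reach k v : (exists p, path e v p /\ size p = k) \/ Q v (L + k%:R * c).
  elim: k v => [|k IH] v; first by left; exists [::].
  have [/existsP[w evw]|nosucc] := boolP [exists w, e v w].
    case: (IH w) => [[p [wp <-]]|Qw]; first by left; exists (w :: p); rewrite /= evw.
    right; apply: Qmono (Qstep _ _ _ evw Qw).
    by rewrite -addrA lerD2l mulrSr mulrDl mul1r.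
  right; apply: Qmono (Qsink v _); first by rewrite lerDl mulr_ge0.
  by move=> w; apply: contraNN nosucc => evw; apply/existsP; exists w.
move=> v; case: (reach #|T| v) => // [[p [vp sizep]]].
by have := acyclic_path_size ac vp; rewrite sizep ltnn.
Qed.

End AcyclicGraphs.

Section NormsOnSymV.
Variables (R : realType) (V : finType) (d : nat).
Variable N : (V -> 'M[R]_d) -> R.
Hypothesis normN : is_norm_SymV N.
Implicit Types (x : V -> 'M[R]_d).

Lemma SymV_sum (I : Type) (s : seq I) (F : I -> V -> 'M[R]_d) :
  (forall i, SymV (F i)) -> SymV (fun v => \sum_(i <- s) F i v).
Proof. by move=> FS v; rewrite /symmx raddf_sum; apply: eq_bigr => i _; apply: FS. Qed.

Lemma SymVZ (r : R) x : SymV x -> SymV (fun v => r *: x v).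
Proof. by move=> xS v; rewrite /symmx linearZ /= xS. Qed.

Lemma normSymV_ge0 x : SymV x -> 0 <= N x.
Proof. by case: normN => N0 _ _ _; apply: N0. Qed.

Lemma normSymVZ (r : R) x : SymV x -> N (fun v => r *: x v) = `|r| * N x.
Proof. by case: normN => _ _ NZ _; apply: NZ. Qed.

Lemma normSymV0 : N (fun _ => 0) = 0.
Proof.
have := @normSymVZ 0 (fun _ => 0) (fun v => @trmx0 _ d d).
by rewrite normr0 mul0r; under eq_fun do rewrite scale0r.
Qed.

Lemma normSymV_sum (I : Type) (s : seq I) (F : I -> V -> 'M[R]_d) :
  (forall i, SymV (F i)) -> N (fun v => \sum_(i <- s) F i v) <= \sum_(i <- s) N (F i).
Proof.
move=> FS; case: normN => _ _ _ Ntri.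
elim: s => [|i s IH].
  by rewrite big_nil; under eq_fun do rewrite big_nil; rewrite normSymV0.
rewrite big_cons; under eq_fun do rewrite big_cons.
by apply: le_trans (Ntri _ _ (FS i) (SymV_sum s FS)) _; rewrite lerD2l.
Qed.

(* A spanning family of Sym_d^V: bounding N on it bounds N by the entries. *)
Definition symmx_unit_at (v0 : V) (i j : 'I_d) : V -> 'M[R]_d :=
  fun v => (v == v0)%:R *: (delta_mx i j + delta_mx j i).

Lemma symmx_unit_at_SymV v0 i j : SymV (symmx_unit_at v0 i j).
Proof. by move=> v; rewrite /symmx /symmx_unit_at linearZ /= linearD /= !trmx_delta addrC. Qed.

Lemma symmx_delta_decomposition (M : 'M[R]_d) : symmx M ->
  M = \sum_i \sum_j (M i j / 2) *: (delta_mx i j + delta_mx j i).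
Proof.
move=> sM; have MT := matrix_sum_delta M.
have MT' : M = \sum_i \sum_j M i j *: delta_mx j i.
  rewrite -{1}sM {1}MT raddf_sum; apply: eq_bigr => i _.
  rewrite raddf_sum; apply: eq_bigr => j _.
  by rewrite -trmx_delta; apply/matrixP => k k'; rewrite !mxE.
have -> : \sum_i \sum_j (M i j / 2) *: (delta_mx i j + delta_mx j i) =
    2^-1 *: ((\sum_i \sum_j M i j *: delta_mx i j) + \sum_i \sum_j M i j *: delta_mx j i).
  rewrite -big_split scaler_sumr; apply: eq_bigr => i _.
  rewrite -big_split scaler_sumr; apply: eq_bigr => j _.
  by rewrite /= !scalerDr !scalerA mulrC.
by rewrite -MT -MT' scalerDr -scalerDl (_ : 2^-1 + 2^-1 = 1 :> R) ?scale1r //; field.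
Qed.

Lemma normSymV_le_entries x (beta : R) : SymV x -> (forall v i j, `|x v i j| <= beta) ->
  N x <= beta * \sum_v0 \sum_i \sum_j (N (symmx_unit_at v0 i j) / 2).
Proof.
move=> xS xb.
pose term v0 i j v := (x v0 i j / 2) *: symmx_unit_at v0 i j v.
have termS v0 i j : SymV (term v0 i j) by apply: SymVZ; apply: symmx_unit_at_SymV.
have -> : x = fun v => \sum_v0 \sum_i \sum_j term v0 i j v.
  apply/funext => v; rewrite (bigD1 v) //= [X in _ + X]big1 => [|v0 /negPf v0v].
    rewrite addr0 [LHS](symmx_delta_decomposition (xS v)).
    by apply: eq_bigr => i _; apply: eq_bigr => j _; rewrite /term /symmx_unit_at eqxx scale1r.
  by rewrite big1 // => i _; rewrite big1 // => j _; rewrite /term /symmx_unit_at eq_sym v0v scale0r scaler0.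
apply: le_trans (normSymV_sum _ (fun v0 => SymV_sum _ (fun i => SymV_sum _ (termS v0 i)))) _.
rewrite mulr_sumr; apply: ler_sum => v0 _.
apply: le_trans (normSymV_sum _ (fun i => SymV_sum _ (termS v0 i))) _.
rewrite mulr_sumr; apply: ler_sum => i _.
apply: le_trans (normSymV_sum _ (termS v0 i)) _.
rewrite mulr_sumr; apply: ler_sum => j _.
rewrite /term normSymVZ; last exact: symmx_unit_at_SymV.
rewrite normrM (ger0_norm (_ : 0 <= 2^-1)) ?invr_ge0 ?ler0n //.
rewrite mulrAC mulrA; apply: ler_wpM2r; first by rewrite invr_ge0 ler0n.
by apply: ler_wpM2r (xb _ _ _); apply/normSymV_ge0/symmx_unit_at_SymV.
Qed.

End NormsOnSymV.

Lemma le_ln_of_expR_le (R : realType) (t M : R) : expR t <= M -> t <= ln M.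
Proof.
move=> tM; have M0 : 0 < M by apply: lt_le_trans (expR_gt0 t) tM.
by rewrite -(expRK t) ler_ln // posrE expR_gt0.
Qed.

Section Coercivity.
Variables (R : realType) (V : finType) (E : rel V) (d : nat) (Gamma : {set V}).
Hypotheses (acE : acyclic E) (sinkG : forall v, is_sink E v -> v \in Gamma)
  (sourceG : forall v, is_source E v -> v \in Gamma).
Variable T : 'M[R]_d -> 'M[R]_d -> R.
Hypothesis gapT : bounds_exp_eigengap T.

(* Each edge moves the largest (smallest) eigenvalue by at most ln M, and
   every vertex lies on a path of fewer than #|V| edges ending at a sink
   (starting at a source). *)
Lemma eigenvalues_bounded (x : V -> 'M[R]_d) l a b (L M : R) :
  (forall v, spectral_pairs (x v) (l v) (a v) (b v)) ->
  (forall v i, v \in Gamma -> `|l v i| <= L) -> 1 <= M ->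
  (forall v w, E v w -> T (x v) (x w) <= M) ->
  forall v i, `|l v i| <= L + #|V|%:R * ln M.
Proof.
move=> xl lG M1 TM.
have lnM0 := ln_ge0 M1.
have upper := @acyclic_sink_induction V R E (fun v g => forall i, l v i <= g) L (ln M) acE lnM0.
have lower := @acyclic_sink_induction V R _ (fun v g => forall i, - g <= l v i) L (ln M)
  (acyclic_converse acE) lnM0.
move=> v i; rewrite ler_norml upper ?lower //.
- by move=> u g g' gg' ug j; rewrite (le_trans _ (ug j)) // lerN2.
- move=> u src j; rewrite lerNl (le_trans _ (lG u j (sourceG src))) //.
  by rewrite -normrN ler_norm.
- move=> u w g Ewu wg j; have [_ _ gap] := gapT (xl w) (xl u).
  have := le_ln_of_expR_le (le_trans (gap _ wg j) (TM _ _ Ewu)).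
  by rewrite opprD; lra.
- by move=> u g g' gg' ug j; apply: le_trans (ug j) gg'.
- move=> u snk j; apply: le_trans (lG u j (sinkG snk)).
  by rewrite ler_norm.
- move=> u w g Euw wg j; have [_ gap _] := gapT (xl u) (xl w).
  have := le_ln_of_expR_le (le_trans (gap _ wg j) (TM _ _ Euw)).
  by lra.
Qed.

Variables (N : (V -> 'M[R]_d) -> R) (z : V -> 'M[R]_d).
Hypothesis normN : is_norm_SymV N.

Lemma SymV_spectral_pairs (x : V -> 'M[R]_d) : SymV x ->
  exists l a b, forall v, spectral_pairs (x v) (l v) (a v) (b v).
Proof.
move=> xS; have /choice[sp xsp] : forall v,
    exists t : ('I_d -> R) * ('I_d -> 'rV[R]_d) * ('I_d -> 'rV[R]_d),
    spectral_pairs (x v) t.1.1 t.1.2 t.2.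
  by move=> v; have [l [a [b xlab]]] := symmx_spectral_pairs (xS v); exists (l, a, b).
by exists (fun v => (sp v).1.1), (fun v => (sp v).1.2), (fun v => (sp v).2).
Qed.

Lemma edge_term_le_edge_sum (x : V -> 'M[R]_d) : SymV x ->
  forall v w, E v w -> T (x v) (x w) <= \sum_v \sum_(w | E v w) T (x v) (x w).
Proof.
move=> xS; have [l [a [b xsp]]] := SymV_spectral_pairs xS.
have T0 v w : 0 <= T (x v) (x w) by have [] := gapT (xsp v) (xsp w).
move=> v w Evw; rewrite (bigD1 v) //= (bigD1 w) //= -addrA lerDl.
apply: addr_ge0; first by apply: sumr_ge0.
by apply: sumr_ge0 => u _; apply: sumr_ge0.
Qed.

Lemma coercive_edge_sum :
  coercive_on (SymVz Gamma z) N (fun x => \sum_v \sum_(w | E v w) T (x v) (x w)).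
Proof.
move=> M; pose M' := Num.max M 1.
pose L := \sum_v `|1 + \tr (z v ^+ 2)|.
pose K := \sum_v0 \sum_i \sum_j (N (@symmx_unit_at R V d v0 i j) / 2).
exists (d%:R * (L + #|V|%:R * ln M') * K) => x [xS xG] Nx.
rewrite ltNge; apply/negP => fxM.
have [l [a [b xsp]]] := SymV_spectral_pairs xS.
(* |l| <= 1 + l^2 <= 1 + tr (x v ^+ 2), and x v = z v on Gamma. *)
have lG v i : v \in Gamma -> `|l v i| <= L.
  move=> vG; have := spectral_sqr_le_mxtrace (xsp v) i; rewrite xG // => li.
  apply: le_trans (_ : 1 + \tr (z v ^+ 2) <= _).
    by rewrite ler_norml; apply/andP; split; nra.
  rewrite (le_trans (ler_norm _)) // /L (bigD1 v) //= lerDl.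
  by apply: sumr_ge0 => u _; apply: normr_ge0.
have TM v w : E v w -> T (x v) (x w) <= M'.
  move=> Evw; apply: le_trans (edge_term_le_edge_sum xS Evw) _.
  by rewrite /M' le_max fxM.
have M'1 : 1 <= M' by rewrite /M' le_max lexx orbT.
have lb := eigenvalues_bounded xsp lG M'1 TM.
have := normSymV_le_entries normN xS (fun v => spectral_entry_le (xsp v) (lb v)).
by rewrite -/K; apply/negP; rewrite -ltNge.
Qed.

End Coercivity.

(* Looplessness follows from acyclicity. *)
Theorem mainTheorem14 (R : realType) (V : finType) (E : rel V) (d : nat)
  (Gamma : {set V}) (z : V -> 'M[R]_d) :
  loopless E ->
  acyclic E ->
  (forall v, is_sink E v -> v \in Gamma) ->
  (forall v, is_source E v -> v \in Gamma) ->
  (exists v, v \notin Gamma) ->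
  (forall v, v \in Gamma -> symmx (z v)) ->
  forall N : (V -> 'M[R]_d) -> R, is_norm_SymV N ->
    coercive_on (SymVz Gamma z) N (phi_d E) /\
    coercive_on (SymVz Gamma z) N (chi_d E).
Proof.
move=> _ acE sinkG sourceG _ _ N normN; split.
- exact (coercive_edge_sum acE sinkG sourceG (@phi_bounds_exp_eigengap R d) z normN).
- exact (coercive_edge_sum acE sinkG sourceG (@chi_bounds_exp_eigengap R d) z normN).
Qed.
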